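(* Let $q$ be a prime power and $n\ge1$. For $1\le i,k\le n$, \[ Q^{(n)}_k(i)=Q^{(n)}_k(i-1)+(-q)^{2n-i}\,Q^{(n-1)}_{k-1}(i-1). \]
   Context: For $m\ge0$ let $X(m)$ be the set of $m\times m$ Hermitian matrices over $\mathbb{F}_{q^2}$, i.e. matrices $A$ with $A^*=A$, where $A^*$ is the transpose of the matrix obtained by applying $x\mapsto x^q$ to each entry (for $m=0$, $X(0)$ consists of the single empty matrix, of rank $0$). Fix a nontrivial character $\chi$ of $(\mathbb{F}_q,+)$ and for $A,B\in X(m)$ put $\langle A,B\rangle=\chi(\operatorname{tr}(A^*B))$. Let $X_k(m)$ be the set of matrices in $X(m)$ of rank $k$. For $0\le i,k\le m$, $Q^{(m)}_k(i)=\sum_{A\in X_k(m)}\langle A,B\rangle$, where $B$ is any element of $X_i(m)$ (this value does not depend on the choice of $B$). *)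

From HB Require Import structures.
From mathcomp Require Import all_boot all_order all_algebra.
From mathcomp Require Import algC.
Set Implicit Arguments. Unset Strict Implicit. Unset Printing Implicit Defensive.
Import GRing.Theory Num.Theory.
Local Open Scope ring_scope.

(* F plays the role of F_{q^2}; conjugation is x |-> x^q. *)
Definition conjq (F : finFieldType) (q : nat) (x : F) : F := x ^+ q.

Definition hadj (F : finFieldType) (q m : nat) (A : 'M[F]_m) : 'M[F]_m :=
  (map_mx (conjq q) A)^T.

Definition herm_mx (F : finFieldType) (q m : nat) (A : 'M[F]_m) : bool :=
  hadj q A == A.

(* chi is an additive character of F_q = {x in F | x^q = x}, valued in algC
   (its values outside F_q are irrelevant). *)
Definition is_Fq_character (F : finFieldType) (q : nat) (chi : F -> algC) : Prop :=
  chi 0 = 1 /\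
  forall x y : F, x ^+ q = x -> y ^+ q = y -> chi (x + y) = chi x * chi y.

Definition Fq_nontrivial (F : finFieldType) (q : nat) (chi : F -> algC) : Prop :=
  exists x : F, x ^+ q = x /\ chi x != 1.

(* Q^{(m)}_k evaluated at the Hermitian matrix B (its value depends only on rank B). *)
Definition Qval (F : finFieldType) (q : nat) (chi : F -> algC) (m k : nat)
  (B : 'M[F]_m) : algC :=
  \sum_(A : 'M[F]_m | herm_mx q A && (\rank A == k)) chi (\tr (hadj q A *m B)).

From HB Require Import structures.
From mathcomp Require Import all_boot all_order all_algebra.
From mathcomp Require Import algC finfield zify.
Import GRing.Theory Num.Theory.
Local Open Scope ring_scope.
Set Implicit Arguments. Unset Strict Implicit. Unset Printing Implicit Defensive.

(* Hermitian congruence A |-> P^* A P leaves Q invariant, and a nonzero Hermitian B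
   is congruent to diag(c, B1) with c in F_q^x.  Split the sum defining
   Q(diag(c, B1)) along the corner entry d of A.  For d <> 0 the Schur complement
   turns the terms into the Gauss sum G(B1) of the Hermitian form x^* B1 x, which
   equals q^(2(m-r)) (-q)^r for r = rank B1, times the sum for B1 with rank shifted
   by one; the term d = 0 does not see c.  As sum_{d in F_q^x} chi(c d) is -1 for
   c <> 0 and q - 1 for c = 0, this gives
     Q_k(diag(c, B1)) = Q_k(diag(0, B1)) - q G(B1) Q_{k-1}(B1),
   which shows by induction on the rank that Q only depends on the rank, and whose
   right-hand side is the claimed recursion. *)

Lemma card_roots_lt (R : finIdomainType) (p : {poly R}) (A : {pred R}) :
  p != 0 -> {in A, forall x, root p x} -> (#|A| < size p)%N.
Proof.
move=> p_neq0 rootA; rewrite cardE; apply: (max_poly_roots p_neq0 _ (enum_uniq _)).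
by apply/allP => x; rewrite mem_enum => /rootA.
Qed.

Lemma conjq_prime_powerD (F : finFieldType) p e :
  prime p -> #|F| = ((p ^ e) ^ 2)%N -> {morph @conjq F (p ^ e) : x y / x + y}.
Proof.
move=> p_prime cardF; have p_char : p \in [pchar F].
  by apply: (card_finPcharP (n := (e * 2)%N)); rewrite // cardF expnM.
by move=> x y; apply: exprDn_pchar; rewrite pnatX pnatE // p_char.
Qed.

Section MatrixFacts.
Variable K : fieldType.

Lemma ulsubmx11 m n (A : 'M[K]_(1 + m, 1 + n)) : ulsubmx A = (A 0 0)%:M.
Proof. by rewrite [LHS]mx11_scalar !mxE; congr (A _ _)%:M; apply: val_inj. Qed.

Lemma block_mx11_00 m n a (B : 'M[K]_(1, n)) (C : 'M[K]_(m, 1)) (D : 'M[K]_(m, n)) :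
  block_mx a%:M B C D 0 0 = a.
Proof.
have := ulsubmx11 (block_mx a%:M B C D); rewrite block_mxKul => /matrixP/(_ 0 0).
by rewrite !mxE eqxx !mulr1n => <-.
Qed.

Lemma mxrank_scalar1 a : \rank (a%:M : 'M[K]_1) = (a != 0).
Proof.
rewrite rank_rV; congr negb; apply/eqP/eqP => [/matrixP/(_ 0 0)|->].
  by rewrite !mxE.
exact: raddf0.
Qed.

Lemma mxrank_congr m n (P : 'M[K]_m) (A : 'M[K]_(m, n)) (Q : 'M[K]_n) :
  P \in unitmx -> Q \in unitmx -> \rank (P *m A *m Q) = \rank A.
Proof.
move=> P_unit Q_unit; rewrite mxrankMfree ?row_free_unit //.
by rewrite -mxrank_tr trmx_mul mxrankMfree ?mxrank_tr ?row_free_unit ?unitmx_tr.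
Qed.

Lemma exists_unitmx_col0 m (w : 'cV[K]_(1 + m)) : w != 0 ->
  exists2 P : 'M[K]_(1 + m), P \in unitmx & P *m delta_mx 0 0 = w.
Proof.
move=> w_neq0; pose f : 'M[K]_(1 + m) := \matrix_(i, j) w j 0.
have e0f : delta_mx 0 0 *m f = w^T by rewrite -rowE; apply/rowP => j; rewrite !mxE.
have [|g g_unit e0g] := @complete_unitmx _ 1 _ (delta_mx 0 0) f.
  by rewrite e0f mxrank_delta rank_rV trmx_eq0 w_neq0.
exists g^T; first by rewrite unitmx_tr.
by apply: trmx_inj; rewrite trmx_mul trmxK trmx_delta -e0g e0f.
Qed.

End MatrixFacts.

Section HermitianCharacterSums.
Variables (F : finFieldType) (q : nat).
Hypothesis cardF : #|F| = (q ^ 2)%N.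
Hypothesis conjqD : {morph @conjq F q : x y / x + y}.

Local Notation cj := (@conjq F q).

Lemma q_gt1 : (1 < q)%N.
Proof.
have : (1 < q ^ 2)%N.
  by rewrite -cardF; apply/card_gt1P; exists 0, 1; rewrite !inE eq_sym oner_neq0.
by case: q => [|[]].
Qed.

Lemma conjq_is_zmod_morphism : zmod_morphism cj.
Proof.
have cj0 : cj 0 = 0 by rewrite /conjq expr0n; case: q q_gt1.
move=> x y; rewrite conjqD; congr (_ + _).
by apply: (addrI (cj y)); rewrite -conjqD !subrr.
Qed.
HB.instance Definition _ := GRing.isZmodMorphism.Build F F cj conjq_is_zmod_morphism.

Lemma conjq_is_monoid_morphism : monoid_morphism cj.
Proof. by split=> [|x y]; rewrite /conjq ?expr1n ?exprMn. Qed.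
HB.instance Definition _ :=
  GRing.isMonoidMorphism.Build F F cj conjq_is_monoid_morphism.

Lemma conjqK : involutive cj.
Proof. by move=> x; rewrite /conjq -exprM mulnn -cardF expf_card. Qed.

Definition Fq : pred F := fun x => cj x == x.

Lemma FqP x : reflect (x ^+ q = x) (x \in Fq).
Proof. exact: eqP. Qed.

Lemma Fq_divring_closed : divring_closed Fq.
Proof.
split=> [|x y /eqP-cjx /eqP-cjy|x y /eqP-cjx /eqP-cjy]; apply/eqP.
- exact: rmorph1.
- by rewrite rmorphB /= cjx cjy.
- by rewrite fmorph_div /= cjx cjy.
Qed.
HB.instance Definition _ := GRing.isDivringClosed.Build F Fq Fq_divring_closed.

Local Notation Fqx := [predD1 Fq & 0%R].

Lemma card_Fq_le : (#|Fq| <= q)%N.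
Proof.
have size_p : size ('X^q - 'X : {poly F}) = q.+1.
  by rewrite size_addl ?size_polyXn // size_polyN size_polyX; apply: q_gt1.
rewrite -ltnS -size_p; apply: card_roots_lt => [|x /FqP xq].
  by rewrite -size_poly_gt0 size_p.
by rewrite rootE !hornerE xq subrr.
Qed.

Definition normq (z : F) := cj z * z.

Lemma normq_Fq z : normq z \in Fq.
Proof. by apply/eqP; rewrite /normq rmorphM /= conjqK mulrC. Qed.

Lemma normq_eq0 z : (normq z == 0) = (z == 0).
Proof. by rewrite /normq /conjq -exprSr expf_eq0. Qed.

Lemma card_normq_fiber_le t : (#|[pred z | normq z == t]| <= q.+1)%N.
Proof.
have size_p : size ('X^(q.+1) - t%:P : {poly F}) = q.+2 by rewrite size_XnsubC.
rewrite -ltnS -size_p; apply: card_roots_lt => [|z /eqP normq_z].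
  by rewrite -size_poly_gt0 size_p.
by rewrite rootE !hornerE -normq_z /normq /conjq -exprSr subrr.
Qed.

Lemma card_normq_fiber0 : #|[pred z | normq z == 0]| = 1%N.
Proof. by rewrite -(card1 (0 : F)); apply: eq_card => z; rewrite !inE normq_eq0. Qed.

Lemma card_F_normq_fibers :
  (q ^ 2 = 1 + \sum_(t in Fqx) #|[pred z | normq z == t]|)%N.
Proof.
rewrite -cardF -sum1_card (partition_big normq (mem Fq)) => [|z _]; last exact: normq_Fq.
rewrite (bigD1 0) /= ?rpred0 //; congr addn.
  by rewrite -[RHS]card_normq_fiber0; apply: sum1_card.
by apply: eq_big => [t|t _]; [rewrite !inE andbC | apply: sum1_card].
Qed.

Lemma sqrq_pred_succ : (q ^ 2 = (q.-1 * q.+1).+1)%N.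
Proof. by case: q q_gt1 => // p _; rewrite -mulnn; nia. Qed.

(* In q^2 = 1 + sum_(t in Fqx) #fibre(t) every fibre has at most q + 1 elements
   and Fqx at most q - 1, so all these bounds are sharp. *)
Lemma card_Fqx : #|Fqx| = q.-1.
Proof.
have cardFq1 : #|Fq| = #|Fqx|.+1 by rewrite (cardD1 0) rpred0.
apply/eqP; rewrite eqn_leq -ltnS prednK ?(ltnW q_gt1) // -cardFq1 card_Fq_le /=.
rewrite -(leq_pmul2r (ltn0Sn q)) -ltnS -sqrq_pred_succ card_F_normq_fibers add1n ltnS.
by rewrite -sum_nat_const; apply: leq_sum => t _; apply: card_normq_fiber_le.
Qed.

Lemma card_normq_fiber t : t \in Fqx -> #|[pred z | normq z == t]| = q.+1.
Proof.
move=> Fqx_t; apply/eqP.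
have [_] := leqif_sum (fun u (_ : u \in Fqx) => leqif_eq (card_normq_fiber_le u)).
move/eqP: card_F_normq_fibers; rewrite sqrq_pred_succ add1n eqSS sum_nat_const card_Fqx.
by move=> /eqP<-; rewrite eqxx => /esym/forall_inP; apply.
Qed.

Definition adjmx m n (A : 'M[F]_(m, n)) : 'M[F]_(n, m) := (map_mx cj A)^T.

Lemma adjmxE m n (A : 'M[F]_(m, n)) i j : adjmx A i j = cj (A j i).
Proof. by rewrite !mxE. Qed.

Lemma adjmxK m n (A : 'M[F]_(m, n)) : adjmx (adjmx A) = A.
Proof. by apply/matrixP => i j; rewrite !adjmxE conjqK. Qed.

Lemma adjmxD m n (A B : 'M[F]_(m, n)) : adjmx (A + B) = adjmx A + adjmx B.
Proof. by rewrite /adjmx map_mxD linearD. Qed.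

Lemma adjmxN m n (A : 'M[F]_(m, n)) : adjmx (- A) = - adjmx A.
Proof. by rewrite /adjmx map_mxN linearN. Qed.

Lemma adjmx0 m n : adjmx (0 : 'M[F]_(m, n)) = 0.
Proof. by rewrite /adjmx map_mx0 trmx0. Qed.

Lemma adjmxZ m n a (A : 'M[F]_(m, n)) : adjmx (a *: A) = cj a *: adjmx A.
Proof. by rewrite /adjmx map_mxZ linearZ. Qed.

Lemma adjmxM m n p (A : 'M[F]_(m, n)) (B : 'M[F]_(n, p)) :
  adjmx (A *m B) = adjmx B *m adjmx A.
Proof. by rewrite /adjmx map_mxM trmx_mul. Qed.

Lemma adjmx_scalar m a : adjmx (a%:M : 'M[F]_m) = (cj a)%:M.
Proof. by rewrite /adjmx map_scalar_mx tr_scalar_mx. Qed.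

Lemma adjmx_block m1 m2 n1 n2 (A : 'M[F]_(m1, n1)) (B : 'M[F]_(m1, n2))
    (C : 'M[F]_(m2, n1)) (D : 'M[F]_(m2, n2)) :
  adjmx (block_mx A B C D) = block_mx (adjmx A) (adjmx C) (adjmx B) (adjmx D).
Proof. by rewrite /adjmx map_block_mx tr_block_mx. Qed.

Lemma adjmx_col m1 m2 n (A : 'M[F]_(m1, n)) (B : 'M[F]_(m2, n)) :
  adjmx (col_mx A B) = row_mx (adjmx A) (adjmx B).
Proof. by rewrite /adjmx map_col_mx tr_col_mx. Qed.

Lemma adjmx_unit n (A : 'M[F]_n) : (adjmx A \in unitmx) = (A \in unitmx).
Proof. by rewrite /adjmx unitmx_tr map_unitmx. Qed.

Lemma mxtrace_adjmx n (A : 'M[F]_n) : \tr (adjmx A) = cj (\tr A).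
Proof.
by rewrite /adjmx mxtrace_tr /mxtrace rmorph_sum; apply: eq_bigr => i _; rewrite mxE.
Qed.

Local Notation herm := (herm_mx q).

Lemma hermP n (A : 'M[F]_n) : reflect (adjmx A = A) (herm A).
Proof. exact: eqP. Qed.

Lemma herm_block m1 m2 (A : 'M[F]_m1) (B : 'M[F]_(m1, m2)) (C : 'M[F]_(m2, m1))
    (D : 'M[F]_m2) :
  herm (block_mx A B C D) = [&& herm A, adjmx C == B & herm D].
Proof.
apply/hermP/and3P; rewrite adjmx_block.
  by case/eq_block_mx => hA hCB _ hD; split; apply/eqP.
by case=> /hermP-> /eqP<- /hermP->; rewrite adjmxK.
Qed.

Lemma herm_submx m1 m2 (A : 'M[F]_(m1 + m2)) : herm A ->
  [/\ herm (ulsubmx A), adjmx (dlsubmx A) = ursubmx A & herm (drsubmx A)].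
Proof. by rewrite -{1}[A]submxK herm_block => /and3P[? /eqP ? ?]. Qed.

Lemma herm_congr m n (P : 'M[F]_(m, n)) (B : 'M[F]_m) :
  herm B -> herm (adjmx P *m B *m P).
Proof. by move=> /hermP B_herm; apply/hermP; rewrite !adjmxM adjmxK B_herm mulmxA. Qed.

Lemma herm_congr_unit n (P B : 'M[F]_n) : P \in unitmx ->
  herm (adjmx P *m B *m P) = herm B.
Proof.
move=> P_unit; apply/idP/idP => [|]; last exact: herm_congr.
move=> /(herm_congr (invmx P)); rewrite !mulmxA -adjmxM mulmxV // -mulmxA mulmxV //.
by rewrite adjmx_scalar rmorph1 mul1mx mulmx1.
Qed.

Lemma herm_scalar n a : a \in Fq -> herm (a%:M : 'M[F]_n).
Proof. by move=> /eqP ha; apply/hermP; rewrite adjmx_scalar ha. Qed.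

Lemma herm_diag_Fq n (A : 'M[F]_n) i : herm A -> A i i \in Fq.
Proof. by move=> /hermP hA; apply/eqP; rewrite -[in RHS]hA adjmxE. Qed.

Lemma mxtrace_herm_Fq n (A : 'M[F]_n) : herm A -> \tr A \in Fq.
Proof. by move=> /hermP hA; apply/eqP; rewrite -mxtrace_adjmx hA. Qed.

Lemma mxtrace_mul_herm_Fq n (A B : 'M[F]_n) : herm A -> herm B -> \tr (A *m B) \in Fq.
Proof.
move=> /hermP hA /hermP hB; apply/eqP.
by rewrite -mxtrace_adjmx adjmxM hA hB mxtrace_mulC.
Qed.

Definition hform m (B : 'M[F]_m) (x : 'cV[F]_m) : F := \tr (adjmx x *m B *m x).

Lemma hform_Fq m (B : 'M[F]_m) x : herm B -> hform B x \in Fq.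
Proof. by move=> B_herm; apply/mxtrace_herm_Fq/herm_congr. Qed.

Definition diag_cons m (c : F) (B : 'M[F]_m) : 'M[F]_(1 + m) := block_mx c%:M 0 0 B.

Definition shear m (d : F) (x : 'cV[F]_m) : 'M[F]_(1 + m) :=
  block_mx 1%:M (d^-1 *: adjmx x) 0 1%:M.

Lemma shear_mulN m d (x : 'cV[F]_m) : shear d x *m shear d (- x) = 1%:M.
Proof.
rewrite /shear mulmx_block !mul1mx !mulmx1 !mul0mx !addr0 add0r adjmxN scalerN.
by rewrite addNr mulmx0 addr0 -scalar_mx_block.
Qed.

Lemma shear_unit m d (x : 'cV[F]_m) : shear d x \in unitmx.
Proof. by case: (mulmx1_unit (shear_mulN d x)). Qed.

Lemma shear_diag_cons m d (x : 'cV[F]_m) (M : 'M[F]_m) : d \in Fqx ->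
  adjmx (shear d x) *m diag_cons d M *m shear d x =
  block_mx d%:M (adjmx x) x (M + d^-1 *: (x *m adjmx x)).
Proof.
case/andP=> d_neq0 /eqP cjd.
rewrite /shear /diag_cons adjmx_block adjmxZ adjmxK fmorphV /= cjd adjmx0 !adjmx_scalar.
rewrite rmorph1 !mulmx_block !mul1mx !mulmx1 !mul0mx !mulmx0 !addr0 !add0r.
rewrite mul_scalar_mx mul_mx_scalar !scalerA mulfV // !scale1r.
by rewrite -scalemxAr addrC.
Qed.

Lemma herm_schur m (A : 'M[F]_(1 + m)) (d : F) : herm A -> ulsubmx A = d%:M ->
  d \in Fqx ->
  let x := dlsubmx A in let M := drsubmx A - d^-1 *: (x *m adjmx x) in
  A = adjmx (shear d x) *m diag_cons d M *m shear d x.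
Proof.
move=> A_herm ulA Fqx_d x M; rewrite shear_diag_cons // subrK -ulA /x.
by have [_ -> _] := herm_submx A_herm; rewrite submxK.
Qed.

Lemma exists_trace_neq0 : exists mu : F, mu + cj mu != 0.
Proof.
apply/existsP; rewrite -negb_forall; apply/negP => /forallP trace0.
have size_p : size ('X^q + 'X : {poly F}) = q.+1.
  by rewrite size_addl ?size_polyXn // size_polyX; apply: q_gt1.
have : (#|F| < size ('X^q + 'X : {poly F})%R)%N.
  apply: card_roots_lt => [|x _]; first by rewrite -size_poly_gt0 size_p.
  by rewrite rootE !hornerE addrC trace0.
by rewrite cardF size_p ltnS -mulnn; move: q_gt1; nia.
Qed.

Lemma mxtrace_delta_mul m (B : 'M[F]_m) i j :
  \tr (adjmx (delta_mx i 0 : 'cV_m) *m B *m (delta_mx j 0 : 'cV_m)) = B i j.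
Proof.
by rewrite /adjmx map_delta_mx trmx_delta -rowE -colE /mxtrace big_ord1 !mxE.
Qed.

(* If B_ii = B_jj = 0, then hform B (e_i + a e_j) is the trace of a B_ij, which is
   nonzero for a suitable a. *)
Lemma exists_hform_neq0 m (B : 'M[F]_m) : herm B -> B != 0 ->
  exists x, hform B x != 0.
Proof.
move=> /hermP B_herm B_neq0; apply/existsP; apply: contraNT B_neq0 => /existsPn hform0.
have {}hform0 x : hform B x = 0 by apply/eqP; rewrite -[_ == 0]negbK hform0.
apply/eqP/matrixP => i j; rewrite mxE; apply/eqP; apply: contraT => Bij_neq0.
have [mu trace_mu] := exists_trace_neq0.
have := hform0 (delta_mx i 0 + (mu / B i j) *: delta_mx j 0 : 'cV_m).
rewrite /hform adjmxD adjmxZ !mulmxDl !mulmxDr -!scalemxAl -!scalemxAr.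
rewrite !mxtraceD !mxtraceZ !mxtrace_delta_mul.
move: (hform0 (delta_mx i 0)) (hform0 (delta_mx j 0)); rewrite /hform !mxtrace_delta_mul.
have -> : B j i = cj (B i j) by rewrite -[B in LHS]B_herm adjmxE.
move=> -> ->; rewrite !mulr0 addr0 add0r -rmorphM mulfVK //.
by move/eqP; rewrite (negPf trace_mu).
Qed.

Lemma herm_congr_diag_cons m (B : 'M[F]_(1 + m)) : herm B -> B != 0 ->
  exists P c B1, [/\ P \in unitmx, c \in Fqx, herm B1 &
                     adjmx P *m B *m P = diag_cons c B1].
Proof.
move=> B_herm B_neq0; have [w hform_w] := exists_hform_neq0 B_herm B_neq0.
have [|P1 P1_unit P1_e0] := exists_unitmx_col0 (w := w).
  by apply: contraNneq hform_w => ->; rewrite /hform mulmx0 mxtrace0.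
set c := hform B w; set B' := adjmx P1 *m B *m P1.
have ulB' : ulsubmx B' = c%:M.
  by rewrite ulsubmx11 -mxtrace_delta_mul /B' /c -P1_e0 /hform adjmxM !mulmxA.
have Fqx_c : c \in Fqx by rewrite inE hform_w hform_Fq.
set x := dlsubmx B'; set M := drsubmx B' - c^-1 *: (x *m adjmx x).
have B'_schur : B' = adjmx (shear c x) *m diag_cons c M *m shear c x :=
  herm_schur (herm_congr P1 B_herm) ulB' Fqx_c.
have B'_diag : adjmx (shear c (- x)) *m B' *m shear c (- x) = diag_cons c M.
  rewrite B'_schur !mulmxA -adjmxM shear_mulN -mulmxA shear_mulN.
  by rewrite adjmx_scalar rmorph1 mul1mx mulmx1.
exists (P1 *m shear c (- x)), c, M; split=> //.
- by rewrite unitmx_mul P1_unit shear_unit.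
- by have := herm_congr (shear c (- x)) (herm_congr P1 B_herm);
    rewrite B'_diag herm_block => /and3P[].
by rewrite -B'_diag adjmxM !mulmxA.
Qed.

Lemma mxrank_diag_cons m c (B : 'M[F]_m) :
  \rank (diag_cons c B) = ((c != 0%R) + \rank B)%N.
Proof. by rewrite rank_diag_block_mx mxrank_scalar1. Qed.

Lemma herm_diag_cons m c (B : 'M[F]_m) : c \in Fq -> herm (diag_cons c B) = herm B.
Proof. by move=> Fq_c; rewrite herm_block herm_scalar // adjmx0 eqxx. Qed.

Lemma hform_diag_cons m c (B : 'M[F]_m) a y :
  hform (diag_cons c B) (col_mx a%:M y) = c * normq a + hform B y.
Proof.
rewrite /hform /diag_cons adjmx_col mul_row_block mul_row_col !mulmx0 addr0 add0r.
rewrite mxtraceD adjmx_scalar -!scalar_mxM mxtrace_scalar.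
by rewrite mulr1n /normq mulrCA -mulrA.
Qed.

Lemma mxrank_congr_diag_cons m (B P : 'M[F]_(1 + m)) c (B1 : 'M[F]_m) :
  P \in unitmx -> c != 0 -> adjmx P *m B *m P = diag_cons c B1 ->
  \rank B = (\rank B1).+1.
Proof.
move=> P_unit c_neq0 PBP; have adjP_unit : adjmx P \in unitmx by rewrite adjmx_unit.
by rewrite -(mxrank_congr B adjP_unit P_unit) PBP mxrank_diag_cons c_neq0.
Qed.

Lemma mxtrace_mul_diag_cons m (A : 'M[F]_(1 + m)) c (B : 'M[F]_m) :
  \tr (A *m diag_cons c B) = A 0 0 * c + \tr (drsubmx A *m B).
Proof.
rewrite -{1}[A]submxK /diag_cons mulmx_block mxtrace_block !mulmx0 !addr0 add0r.
by rewrite ulsubmx11 -scalar_mxM mxtrace_scalar mulr1n.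
Qed.

Variable chi : F -> algC.
Hypothesis chi0 : chi 0 = 1.
Hypothesis chiD : {in Fq &, {morph chi : x y / x + y >-> x * y}}.
Hypothesis chi_nontrivial : exists2 x, x \in Fq & chi x != 1.

Lemma sum_chi_Fq : \sum_(t in Fq) chi t = 0.
Proof.
have [x Fq_x chi_x] := chi_nontrivial.
have : (\sum_(t in Fq) chi t) * chi x = \sum_(t in Fq) chi t.
  rewrite [RHS](reindex_inj (addIr x)) mulr_suml /=.
  by apply: eq_big => [t | t Fq_t]; rewrite ?rpredDr ?chiD.
move/eqP; rewrite -subr_eq0 -{2}[\sum_(t in Fq) _]mulr1 -mulrBr mulf_eq0 subr_eq0.
by rewrite (negPf chi_x) orbF => /eqP.
Qed.

Lemma sum_chi_FqxM e : e \in Fqx -> \sum_(t in Fqx) chi (e * t) = -1.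
Proof.
case/andP=> e_neq0 Fq_e.
have : \sum_(t in Fq) chi (e * t) = 0.
  rewrite -[RHS]sum_chi_Fq [RHS](reindex_inj (mulfI e_neq0)) /=.
  by apply: eq_bigl => t; rewrite rpredMl ?unitfE.
rewrite (bigD1 0) ?rpred0 //= mulr0 chi0 => /eqP; rewrite addrC addr_eq0 => /eqP <-.
by apply: eq_bigl => t; rewrite !inE andbC.
Qed.

Lemma sum_chi_normq e : e \in Fqx -> \sum_(z : F) chi (e * normq z) = - q%:R.
Proof.
move=> Fqx_e; rewrite (partition_big normq (mem Fq)) /= => [|z _]; last exact: normq_Fq.
rewrite (bigD1 0) ?rpred0 //= (eq_bigr (fun=> 1)) => [|z /eqP->]; last by rewrite mulr0.
rewrite sumr_const card_normq_fiber0.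
rewrite (eq_big (mem Fqx) (fun t => q.+1%:R * chi (e * t))) => [|t|t /andP[Fq_t t_neq0]].
- by rewrite -mulr_sumr sum_chi_FqxM // mulrN1 -natr1 opprD addrCA subrr addr0.
- by rewrite !inE andbC.
rewrite (eq_bigr (fun=> chi (e * t))) => [|z /eqP-> //].
by rewrite sumr_const mulr_natl card_normq_fiber // inE t_neq0.
Qed.

Definition Qsum m (R : pred nat) (B : 'M[F]_m) : algC :=
  \sum_(A : 'M[F]_m | herm A && R (\rank A)) chi (\tr (A *m B)).

Lemma Qval_Qsum m k (B : 'M[F]_m) : Qval q chi k B = Qsum (pred1 k) B.
Proof. by apply: eq_bigr => A /andP[/eqP-> _]. Qed.

Lemma Qsum_congr m R (B P : 'M[F]_m) : P \in unitmx ->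
  Qsum R (adjmx P *m B *m P) = Qsum R B.
Proof.
move=> P_unit; have adjP_unit : adjmx P \in unitmx by rewrite adjmx_unit.
have congrK : cancel (fun A => P *m A *m adjmx P)
    (fun A => invmx P *m A *m invmx (adjmx P)).
  by move=> A; rewrite !mulmxA mulVmx // mul1mx mulmxK.
rewrite /Qsum [RHS](reindex_inj (can_inj congrK)) /=.
apply: eq_big => [A | A _].
  by rewrite -{1}[P]adjmxK herm_congr_unit ?mxrank_congr.
by rewrite !mulmxA mxtrace_mulC !mulmxA.
Qed.

Definition gauss_sum m (B : 'M[F]_m) (s : F) : algC :=
  \sum_(x : 'cV[F]_m) chi (s * hform B x).

Lemma gauss_sum_congr m (B P : 'M[F]_m) s : P \in unitmx ->
  gauss_sum (adjmx P *m B *m P) s = gauss_sum B s.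
Proof.
move=> P_unit; rewrite /gauss_sum [RHS](reindex_inj (can_inj (mulKmx P_unit))) /=.
by apply: eq_bigr => x _; rewrite /hform adjmxM !mulmxA.
Qed.

Lemma gauss_sum0 m s : gauss_sum (0 : 'M[F]_m) s = q%:R ^+ (2 * m).
Proof.
rewrite /gauss_sum (eq_bigr (fun=> 1)) => [|x _]; last first.
  by rewrite /hform mulmx0 mul0mx mxtrace0 mulr0.
by rewrite sumr_const card_mx cardF muln1 -expnM natrX mulnC.
Qed.

Lemma gauss_sum_diag_cons m c (B : 'M[F]_m) s : c \in Fqx -> s \in Fqx -> herm B ->
  gauss_sum (diag_cons c B) s = - q%:R * gauss_sum B s.
Proof.
move=> /andP[c_neq0 Fq_c] /andP[s_neq0 Fq_s] B_herm.
pose join_cV (p : F * 'cV[F]_m) : 'cV[F]_(1 + m) := col_mx p.1%:M p.2.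
have join_bij : bijective join_cV.
  exists (fun x => (usubmx x 0 0, dsubmx x)) => [[a y]|x] /=.
    by rewrite col_mxKu col_mxKd mxE eqxx mulr1n.
  by rewrite -[in RHS](vsubmxK x) [usubmx x in RHS]mx11_scalar.
rewrite /gauss_sum (reindex join_cV) /=; last exact: onW_bij.
rewrite -(pair_bigA _ (fun a y => chi (s * hform (diag_cons c B) (join_cV (a, y))))) /=.
rewrite -(sum_chi_normq (e := s * c)) ?inE ?mulf_neq0 ?rpredM // mulr_suml.
apply: eq_bigr => a _; rewrite mulr_sumr; apply: eq_bigr => y _.
rewrite /= hform_diag_cons mulrDr mulrA chiD //.
  by rewrite rpredM ?normq_Fq // rpredM.
by rewrite rpredM ?hform_Fq.
Qed.

Lemma gauss_sum_herm m (B : 'M[F]_m) s : herm B -> s \in Fqx ->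
  gauss_sum B s = q%:R ^+ (2 * (m - \rank B)) * (- q%:R) ^+ \rank B.
Proof.
elim: m B => [|m IHm] B B_herm Fqx_s.
  by rewrite [B]flatmx0 gauss_sum0 mxrank0 mulr1.
have [->|B_neq0] := eqVneq B 0; first by rewrite gauss_sum0 mxrank0 subn0 mulr1.
have [P [c [B1 [P_unit Fqx_c B1_herm PBP]]]] := herm_congr_diag_cons B_herm B_neq0.
have /andP[c_neq0 _] := Fqx_c.
rewrite (mxrank_congr_diag_cons P_unit c_neq0 PBP) -(gauss_sum_congr B s P_unit) PBP.
by rewrite gauss_sum_diag_cons // IHm // subSS exprS mulrCA.
Qed.

Definition Qsum_corner m (R : pred nat) (B : 'M[F]_m) (d : F) : algC :=
  \sum_(A : 'M[F]_(1 + m) | [&& herm A, R (\rank A) & A 0 0 == d])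
    chi (\tr (drsubmx A *m B)).

Lemma Qsum_diag_cons_corner m R c (B : 'M[F]_m) : c \in Fq -> herm B ->
  Qsum R (diag_cons c B) = \sum_(d : F) chi (c * d) * Qsum_corner R B d.
Proof.
move=> Fq_c B_herm; rewrite /Qsum.
rewrite (partition_big (fun A : 'M[F]_(1 + m) => A 0 0) predT) //=.
apply: eq_bigr => d _; rewrite mulr_sumr; apply: eq_big => [A | A].
  by rewrite andbA.
case/andP=> /andP[A_herm _] /eqP A00.
have [_ _ drA_herm] := herm_submx A_herm.
rewrite mxtrace_mul_diag_cons A00 mulrC chiD //.
  by rewrite rpredM // -A00 herm_diag_Fq.
exact: mxtrace_mul_herm_Fq.
Qed.

Lemma Qsum_corner_notFq m R (B : 'M[F]_m) d : d \notin Fq -> Qsum_corner R B d = 0.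
Proof.
move=> notFq_d; rewrite /Qsum_corner big_pred0 // => A.
by apply: contraNF notFq_d => /and3P[A_herm _ /eqP<-]; apply: herm_diag_Fq.
Qed.

(* Matrices with corner d != 0 are parametrized by their Schur complement M and
   first column x, and tr (drsubmx A *m B) splits as tr (M *m B) + d^-1 hform B x. *)
Lemma Qsum_corner_Fqx m R (B : 'M[F]_m) d : d \in Fqx -> herm B ->
  Qsum_corner R B d = gauss_sum B d^-1 * Qsum (fun r => R r.+1) B.
Proof.
move=> Fqx_d B_herm; have /andP[d_neq0 Fq_d] := Fqx_d.
pose S (p : 'cV[F]_m * 'M[F]_m) := adjmx (shear d p.1) *m diag_cons d p.2 *m shear d p.1.
pose T (A : 'M[F]_(1 + m)) :=
  (dlsubmx A, drsubmx A - d^-1 *: (dlsubmx A *m adjmx (dlsubmx A))).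
have S_block p :
    S p = block_mx d%:M (adjmx p.1) p.1 (p.2 + d^-1 *: (p.1 *m adjmx p.1)).
  exact: shear_diag_cons.
rewrite /Qsum_corner (reindex_onto S T) => [|A /and3P[A_herm _ /eqP A00]]; last first.
  by apply/esym/herm_schur; rewrite ?ulsubmx11 ?A00.
rewrite /gauss_sum /Qsum mulr_suml; under [RHS]eq_bigr do rewrite mulr_sumr.
rewrite [RHS]pair_big_dep /=.
apply: eq_big => [p | p /andP[/and3P[p_herm _ _] _]].
  rewrite herm_congr_unit ?shear_unit ?herm_diag_cons //.
  rewrite mxrank_congr ?adjmx_unit ?shear_unit //.
  rewrite mxrank_diag_cons d_neq0 [in R _]add1n S_block block_mx11_00 eqxx andbT.
  by rewrite /T block_mxKdl block_mxKdr addrK -surjective_pairing eqxx andbT.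
rewrite herm_congr_unit ?shear_unit ?herm_diag_cons // in p_herm.
rewrite S_block block_mxKdr mulmxDl mxtraceD -scalemxAl mxtraceZ -mulmxA.
rewrite [\tr (p.1 *m _)]mxtrace_mulC addrC.
by rewrite chiD ?mxtrace_mul_herm_Fq ?rpredM ?rpredV ?hform_Fq.
Qed.

Lemma Qsum_diag_cons m R c (B : 'M[F]_m) : c \in Fqx -> herm B ->
  Qsum R (diag_cons c B) =
    Qsum R (diag_cons 0 B) - q%:R * gauss_sum B 1 * Qsum (fun r => R r.+1) B.
Proof.
move=> Fqx_c B_herm; pose K := gauss_sum B 1 * Qsum (fun r => R r.+1) B.
have Qsum_split c' : c' \in Fq ->
    Qsum R (diag_cons c' B) = Qsum_corner R B 0 + (\sum_(d in Fqx) chi (c' * d)) * K.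
  move=> Fq_c'; rewrite Qsum_diag_cons_corner // (bigD1 0) //= mulr0 chi0 mul1r.
  rewrite (bigID (mem Fq)) /= [\sum_(d | _ && (d \notin Fq)) _]big1 ?addr0;
    last by move=> d /andP[_ /Qsum_corner_notFq->]; rewrite mulr0.
  congr (_ + _); rewrite mulr_suml; apply: eq_big => [d | d /andP[d_neq0 Fq_d]].
    by rewrite !inE andbC.
  rewrite Qsum_corner_Fqx ?inE ?d_neq0 // /K !gauss_sum_herm //.
    by rewrite inE oner_neq0 rpred1.
  by rewrite inE invr_eq0 d_neq0 rpredV.
have q_gt0 : (0 < q)%N by apply: ltnW q_gt1.
have pred_q : (q.-1)%:R - q%:R = -1 :> algC.
  by rewrite -{2}(prednK q_gt0) -natr1 opprD addrA subrr add0r.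
rewrite !Qsum_split ?rpred0 //; last by case/andP: Fqx_c.
rewrite sum_chi_FqxM // (eq_bigr (fun=> 1)) => [|d _]; last by rewrite mul0r chi0.
by rewrite sumr_const card_Fqx -addrA -mulrA -mulrBl pred_q.
Qed.

Lemma Qsum_rank m R (B B' : 'M[F]_m) : herm B -> herm B' -> \rank B = \rank B' ->
  Qsum R B = Qsum R B'.
Proof.
move=> B_herm B'_herm rBB'; move eq_r : (\rank B) rBB' => r.
elim: r m R B B' B_herm B'_herm eq_r => [|r IHr] [|m] R B B' B_herm B'_herm rB rB'.
- by rewrite [B]flatmx0 [B']flatmx0.
- by move/eqP: rB; move/eqP: rB'; rewrite eq_sym !mxrank_eq0 => /eqP-> /eqP->.
- by move: rB; rewrite [B]flatmx0 mxrank0.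
have B_neq0 : B != 0 by apply: contra_eqN rB => /eqP->; rewrite mxrank0.
have B'_neq0 : B' != 0 by apply: contra_eqN rB' => /eqP->; rewrite mxrank0.
have [P [c [B1 [P_unit Fqx_c B1_herm PBP]]]] := herm_congr_diag_cons B_herm B_neq0.
have [P' [c' [B1' [P'_unit Fqx_c' B1'_herm PBP']]]] :=
  herm_congr_diag_cons B'_herm B'_neq0.
have /andP[c_neq0 _] := Fqx_c; have /andP[c'_neq0 _] := Fqx_c'.
move: rB rB'; rewrite (mxrank_congr_diag_cons P_unit c_neq0 PBP).
rewrite (mxrank_congr_diag_cons P'_unit c'_neq0 PBP') => -[rB1] -[rB1'].
rewrite -[LHS](Qsum_congr R B P_unit) -[RHS](Qsum_congr R B' P'_unit) PBP PBP'.
have Fqx1 : 1 \in Fqx by rewrite inE oner_neq0 rpred1.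
have Q0 : Qsum R (diag_cons 0 B1) = Qsum R (diag_cons 0 B1').
  by apply: IHr; rewrite ?herm_diag_cons ?rpred0 ?mxrank_diag_cons ?eqxx.
have Q1 : Qsum (fun r => R r.+1) B1 = Qsum (fun r => R r.+1) B1' by apply: IHr.
have G1 : gauss_sum B1 1 = gauss_sum B1' 1 by rewrite !gauss_sum_herm // rB1 rB1'.
by rewrite [LHS]Qsum_diag_cons // [RHS]Qsum_diag_cons // Q0 Q1 G1.
Qed.

Lemma Qsum_recursion n i k (Bi Bi1 : 'M[F]_n) (C : 'M[F]_n.-1) :
  (1 <= i <= n)%N -> (1 <= k)%N ->
  herm Bi -> \rank Bi = i -> herm Bi1 -> \rank Bi1 = i.-1 ->
  herm C -> \rank C = i.-1 ->
  Qsum (pred1 k) Bi =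
    Qsum (pred1 k) Bi1 + (- q%:R) ^+ (2 * n - i) * Qsum (pred1 k.-1) C.
Proof.
case: n Bi Bi1 C => [|m] Bi Bi1 C /andP[i_gt0 i_le_n]; first by case: i i_gt0 i_le_n.
move=> k_gt0 Bi_herm rBi Bi1_herm rBi1 C_herm rC.
have Bi_neq0 : Bi != 0 by apply: contra_eqN rBi => /eqP->; rewrite mxrank0 eq_sym -lt0n.
have [P [c [B1 [P_unit Fqx_c B1_herm PBP]]]] := herm_congr_diag_cons Bi_herm Bi_neq0.
have /andP[c_neq0 _] := Fqx_c.
have rB1 : \rank B1 = i.-1 by rewrite -rBi (mxrank_congr_diag_cons P_unit c_neq0 PBP).
rewrite -[LHS](Qsum_congr _ Bi P_unit) PBP Qsum_diag_cons //.
have -> : Qsum (fun r => pred1 k r.+1) B1 = Qsum (pred1 k.-1) C.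
  rewrite -(Qsum_rank _ B1_herm C_herm) ?rB1 ?rC //.
  by case: k k_gt0.
have -> : Qsum (pred1 k) (diag_cons 0 B1) = Qsum (pred1 k) Bi1.
  apply: Qsum_rank => //; first by rewrite herm_diag_cons ?rpred0.
  by rewrite mxrank_diag_cons eqxx rB1 rBi1.
have Fqx1 : 1 \in Fqx by rewrite inE oner_neq0 rpred1.
rewrite gauss_sum_herm // rB1 mulrA -mulNr; congr (_ + _ * _).
rewrite [q%:R ^+ _]exprM -sqrrN -exprM -!mulNr -exprS -exprD.
by congr (_ ^+ _); move: i_gt0 i_le_n; lia.
Qed.

End HermitianCharacterSums.

Theorem lemmaA1 (F : finFieldType) (q : nat) (chi : F -> algC) (n i k : nat)
  (Bi : 'M[F]_n) (Bi1 : 'M[F]_n) (C : 'M[F]_n.-1) :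
  (exists p e : nat, [/\ prime p, (0 < e)%N & q = (p ^ e)%N]) ->
  #|F| = (q ^ 2)%N ->
  is_Fq_character q chi -> Fq_nontrivial q chi ->
  (1 <= n)%N -> (1 <= i <= n)%N -> (1 <= k <= n)%N ->
  herm_mx q Bi -> \rank Bi = i ->
  herm_mx q Bi1 -> \rank Bi1 = i.-1 ->
  herm_mx q C -> \rank C = i.-1 ->
  Qval q chi k Bi =
    Qval q chi k Bi1 + (- (q%:R : algC)) ^+ (2 * n - i) * Qval q chi k.-1 C.
Proof.
move=> [p [e [p_prime _ ->]]] cardF [chi0 chiD] [x [Fq_x chi_x]] _ i_bounds.
case/andP=> k_gt0 _; have conjqD := conjq_prime_powerD p_prime cardF.
rewrite !Qval_Qsum; apply: Qsum_recursion => //.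
- by move=> y z /FqP Fq_y /FqP Fq_z; apply: chiD.
- by exists x; first exact/FqP.
Qed.
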